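(* Let $\mathcal{A}$ be a complete topological ring and let $\mathcal{B}$ be a complete topological $\mathcal{A}$-algebra. Then there is a one-to-one correspondence between restricted exponential $\mathcal{A}$-homomorphisms $\mathrm{e}\colon\mathcal{B}\rightarrow\mathcal{B}\{T\}$ and topologically integrable iterated higher $\mathcal{A}$-derivations of $\mathcal{B}$, given by associating to $\mathrm{e}=\sum_{i\in\mathbb{N}}\mathrm{e}_iT^i$ the family $D=\{D^{(i)}\}_{i\ge0}$ with $D^{(i)}=\mathrm{e}_i$ (and conversely $D\mapsto\sum_i D^{(i)}T^i$).
   Context: Conventions: all topological rings and modules are linearly topologized and admit a countable fundamental system of neighbourhoods of $0$ consisting of open ideals (resp. submodules); homomorphisms of topological rings/modules are continuous. A topological ring is complete if the canonical map to $\varprojlim_{\mathfrak{a}}\mathcal{A}/\mathfrak{a}$ (over open ideals, quotients discrete, inverse limit topology) is an isomorphism of topological rings. A complete topological $\mathcal{A}$-algebra is a complete topological ring with a continuous ring homomorphism from $\mathcal{A}$. For a complete topological ring $\mathcal{B}$, $\mathcal{B}\{T\}$ (resp. $\mathcal{B}\{T,T'\}$) is the ring of restricted power series: formal power series whose coefficients converge to $0$ (for every open ideal $\mathfrak{b}$, all but finitely many coefficients lie in $\mathfrak{b}$), topologized by the ideals of series with all coefficients in $\mathfrak{b}$, $\mathfrak{b}$ open. A restricted exponential $\mathcal{A}$-homomorphism is a continuous $\mathcal{A}$-algebra homomorphism $\mathrm{e}\colon\mathcal{B}\to\mathcal{B}\{T\}$, written $\mathrm{e}(b)=\sum_i\mathrm{e}_i(b)T^i$,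 such that $\mathrm{e}_0=\mathrm{id}_{\mathcal{B}}$ and, for every $b\in\mathcal{B}$, $\sum_{(i,j)\in\mathbb{N}^2}\mathrm{e}_j(\mathrm{e}_i(b))T'^jT^i=\sum_{\ell\in\mathbb{N}}\mathrm{e}_\ell(b)(T+T')^\ell$ in $\mathcal{B}\{T,T'\}$. A continuous iterated higher $\mathcal{A}$-derivation of $\mathcal{B}$ is a family $D=\{D^{(i)}\}_{i\ge0}$ of continuous $\mathcal{A}$-module homomorphisms $\mathcal{B}\to\mathcal{B}$ with $D^{(0)}=\mathrm{id}$, $D^{(i)}(bb')=\sum_{j=0}^iD^{(j)}(b)D^{(i-j)}(b')$ and $D^{(i)}\circ D^{(j)}=\binom{i+j}{i}D^{(i+j)}$. It is topologically integrable if $(D^{(i)})_i$ converges continuously to $0$: for every $b\in\mathcal{B}$ and open ideal $\mathfrak{b}'$ there exist an open ideal $\mathfrak{b}$ and $n_0$ with $D^{(n)}(b+\mathfrak{b})\subseteq\mathfrak{b}'$ for all $n\ge n_0$. *)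

From mathcomp Require Import all_boot all_algebra.
Set Implicit Arguments. Unset Strict Implicit. Unset Printing Implicit Defensive.
Import GRing.Theory.
Local Open Scope ring_scope.

Definition is_ideal (R : comPzRingType) (I : R -> Prop) : Prop :=
  [/\ I 0, (forall x y, I x -> I y -> I (x + y)), (forall x, I x -> I (- x))
    & (forall r x, I x -> I (r * x))].

(* A linear topology with a countable fundamental system of neighbourhoods
   of 0 consisting of open ideals, presented by a decreasing sequence of
   ideals U 0 ⊇ U 1 ⊇ ... ; the open ideals are those containing some U n. *)
Definition lin_top (R : comPzRingType) (U : nat -> R -> Prop) : Prop :=
  (forall n, is_ideal (U n)) /\ (forall n x, U n.+1 x -> U n x).

(* Completeness: the canonical map R -> lim_n R / U n is bijective
   (injective: separatedness; surjective: every compatible family of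
   residue classes, given by representatives x n with x (n+1) = x n mod U n,
   comes from an element of R).  Since the U n are cofinal among the open
   ideals, this is the inverse limit over all open ideals, and a bijection
   is automatically a homeomorphism for these topologies. *)
Definition complete (R : comPzRingType) (U : nat -> R -> Prop) : Prop :=
  (forall x : R, (forall n, U n x) -> x = 0) /\
  (forall x : nat -> R, (forall n, U n (x n.+1 - x n)) ->
     exists y : R, forall n, U n (y - x n)).

(* Continuity of a map between linearly topologized rings (used for additive
   maps, for which continuity at 0 is continuity). *)
Definition lt_continuous (R S : comPzRingType) (UR : nat -> R -> Prop)
  (US : nat -> S -> Prop) (g : R -> S) : Prop :=
  forall n, exists m, forall x, UR m x -> US n (g x).

Definition cont_A_linear (A B : comPzRingType) (f : {rmorphism A -> B})
  (UB : nat -> B -> Prop) (D : B -> B) : Prop :=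
  [/\ (forall x y, D (x + y) = D x + D y),
      (forall a x, D (f a * x) = f a * D x)
    & lt_continuous UB UB D].

(* A family E = (E i)_i of maps B -> B represents the map
   e : B -> B[[T]], e(b) = \sum_i E i b T^i. *)

(* e takes values in B{T}: coefficients converge to 0. *)
Definition coeffs_to_zero (B : comPzRingType) (UB : nat -> B -> Prop)
  (c : nat -> B) : Prop :=
  forall n, exists i0, forall i, (i0 <= i)%N -> UB n (c i).

Definition restricted_exp (A B : comPzRingType) (f : {rmorphism A -> B})
  (UB : nat -> B -> Prop) (E : nat -> B -> B) : Prop :=
  [/\
      (forall b, coeffs_to_zero UB (fun i => E i b)),
      (* continuity, for the topology of B{T} given by the ideals of series
         with all coefficients in U n *)
      (forall n, exists m, forall b, UB m b -> forall i, UB n (E i b)),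
      (* e is a ring homomorphism B -> B{T} *)
      [/\ (forall i x y, E i (x + y) = E i x + E i y),
          (forall i x y, E i (x * y) = \sum_(j < i.+1) E j x * E (i - j)%N y),
          E 0%N 1 = 1 & (forall i, E i.+1 1 = 0)],
      (* e is compatible with the A-algebra structures (B{T} gets its
         A-algebra structure through constants) *)
      (forall a, E 0%N (f a) = f a /\ forall i, E i.+1 (f a) = 0) /\
      (forall b, E 0%N b = b)
    & (* exponential condition, coefficient of T^i T'^j in
         \sum_{i,j} e_j(e_i(b)) T'^j T^i = \sum_l e_l(b) (T+T')^l *)
      (forall b i j, E j (E i b) = E (i + j)%N b *+ 'C(i + j, i))].

Definition iterated_HS_derivation (A B : comPzRingType) (f : {rmorphism A -> B})
  (UB : nat -> B -> Prop) (D : nat -> B -> B) : Prop :=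
  [/\ (forall i, cont_A_linear f UB (D i)),
      (forall b, D 0%N b = b),
      (forall i x y, D i (x * y) = \sum_(j < i.+1) D j x * D (i - j)%N y)
    & (forall i j b, D i (D j b) = D (i + j)%N b *+ 'C(i + j, i))].

(* Topological integrability: (D i)_i converges continuously to 0. *)
Definition top_integrable (B : comPzRingType) (UB : nat -> B -> Prop)
  (D : nat -> B -> B) : Prop :=
  forall (b : B) (n' : nat), exists m n0, forall k, (n0 <= k)%N ->
    forall x, UB m x -> UB n' (D k (b + x)).

From mathcomp Require Import all_boot all_algebra.
Set Implicit Arguments. Unset Strict Implicit. Unset Printing Implicit Defensive.
Import GRing.Theory.
Local Open Scope ring_scope.

(** The correspondence is the identity on families of maps, so the content is
   that the two sets of axioms agree.  Algebraically, the Leibniz rule at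
   [1 * 1] forces [e_(i+1)(1) = 0], which makes the coefficient maps
   [A]-linear and conversely kills [e_(i+1)] on scalars.  Topologically,
   integrability of [D] evaluated at [b + 0] says that the coefficients of
   [e(b)] tend to [0], and evaluated at [0 + x] that all but finitely many
   [D^(k)] are uniformly continuous; the finitely many remaining ones are
   continuous, so [e] is continuous into [B{T}]. *)

Section LinearTopology.

Variables (R : comPzRingType) (U : nat -> R -> Prop).
Hypothesis topU : lin_top U.

Lemma lin_top0 n : U n 0.
Proof. by case: topU => /(_ n) []. Qed.

Lemma lin_topD n x y : U n x -> U n y -> U n (x + y).
Proof. by case: topU => /(_ n) [_ addU _ _] _; apply: addU. Qed.

Lemma lin_top_le m n x : (m <= n)%N -> U n x -> U m x.
Proof.
elim: n => [|n IHn]; first by rewrite leqn0 => /eqP ->.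
rewrite leq_eqVlt => /orP [/eqP -> // | lt_mn] /(proj2 topU); exact: IHn.
Qed.

Lemma lt_continuous_finite_family (D : nat -> R -> R) :
  (forall k, lt_continuous U U (D k)) ->
  forall N n, exists m, forall x, U m x -> forall k, (k < N)%N -> U n (D k x).
Proof.
move=> contD; elim=> [|N IHN] n; first by exists 0%N.
have [m Hm] := IHN n; have [mN HmN] := contD N n.
exists (maxn m mN) => x Ux k; rewrite ltnS leq_eqVlt => /orP [/eqP -> | lt_kN].
  by apply/HmN; apply: lin_top_le Ux; apply: leq_maxr.
by apply: Hm lt_kN; apply: lin_top_le Ux; apply: leq_maxl.
Qed.

Lemma top_integrable_coeffs_to_zero (D : nat -> R -> R) :
  top_integrable U D -> forall b, coeffs_to_zero U (fun k => D k b).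
Proof.
move=> intD b n; have [m [k0 Hk0]] := intD b n.
by exists k0 => k le_k0k; rewrite -[b]addr0; apply: Hk0 (lin_top0 m).
Qed.

Lemma top_integrable_equicontinuous (D : nat -> R -> R) :
  (forall k, lt_continuous U U (D k)) -> top_integrable U D ->
  forall n, exists m, forall x, U m x -> forall k, U n (D k x).
Proof.
move=> contD intD n; have [m [k0 Hk0]] := intD 0 n.
have [M HM] := lt_continuous_finite_family contD k0 n.
exists (maxn m M) => x Ux k; case: (ltnP k k0) => [lt_kk0 | le_k0k].
  by apply: HM lt_kk0; apply: lin_top_le Ux; apply: leq_maxr.
by rewrite -[x]add0r; apply: Hk0 le_k0k _ (lin_top_le (leq_maxl m M) Ux).
Qed.

Lemma uniformly_continuous_top_integrable (D : nat -> R -> R) :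
  (forall k x y, D k (x + y) = D k x + D k y) ->
  (forall b, coeffs_to_zero U (fun k => D k b)) ->
  (forall n, exists m, forall x, U m x -> forall k, U n (D k x)) ->
  top_integrable U D.
Proof.
move=> addD D_to0 contD b n; have [k0 Hk0] := D_to0 b n; have [m Hm] := contD n.
by exists m, k0 => k le_k0k x Ux; rewrite addD; apply: lin_topD; [apply: Hk0 | apply: Hm].
Qed.

End LinearTopology.

Section HigherDerivation.

Variables (A B : comPzRingType) (f : {rmorphism A -> B}) (D : nat -> B -> B).

Hypothesis leibnizD :
  forall i x y, D i (x * y) = \sum_(j < i.+1) D j x * D (i - j)%N y.

Lemma leibniz_one_succ : D 0%N 1 = 1 -> forall i, D i.+1 1 = 0.
Proof.
move=> D01; elim/ltn_ind => i IHi.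
have := leibnizD i.+1 1 1; rewrite mulr1 big_ord_recl big_ord_recr /=.
rewrite big1 => [|j _]; last by rewrite /bump /= add1n IHi ?mul0r.
rewrite /bump /= add1n subn0 subnn D01 mul1r mulr1 add0r => twice.
by apply: (addrI (D i.+1 1)); rewrite addr0 -twice.
Qed.

Lemma leibniz_scalar_linear :
  (forall b, D 0%N b = b) -> (forall a i, D i.+1 (f a) = 0) ->
  forall i a x, D i (f a * x) = f a * D i x.
Proof.
move=> D0 Df i a x; rewrite leibnizD big_ord_recl big1 => [|j _].
  by rewrite addr0 D0 subn0.
by rewrite Df mul0r.
Qed.

Lemma scalar_linear_succ_scalar :
  (forall i a x, D i (f a * x) = f a * D i x) -> (forall i, D i.+1 1 = 0) ->
  forall a i, D i.+1 (f a) = 0.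
Proof. by move=> linD D1 a i; rewrite -[f a]mulr1 linD D1 mulr0. Qed.

Lemma binomial_composition_sym :
  (forall b i j, D j (D i b) = D (i + j)%N b *+ 'C(i + j, i)) <->
  (forall i j b, D i (D j b) = D (i + j)%N b *+ 'C(i + j, i)).
Proof.
split=> DD; [move=> i j b | move=> b i j];
  by rewrite DD addnC -bin_sub ?leq_addl // addnK.
Qed.

End HigherDerivation.

Theorem theorem2p26 (A B : comPzRingType)
  (UA : nat -> A -> Prop) (UB : nat -> B -> Prop) (f : {rmorphism A -> B}) :
  lin_top UA -> complete UA -> lin_top UB -> complete UB ->
  lt_continuous UA UB f ->
  forall E : nat -> B -> B,
    restricted_exp f UB E <->
    (iterated_HS_derivation f UB E /\ top_integrable UB E).
Proof.
move=> _ _ topB _ _ E; split.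
- case=> E_to0 contE [addE leibE E01 E1] [Ef E0] compE.
  split; last exact: uniformly_continuous_top_integrable.
  split=> //; last exact/binomial_composition_sym.
  move=> i; split=> //; last by move=> n; have [m Hm] := contE n; exists m => x /Hm.
  by apply: leibniz_scalar_linear => // a k; case: (Ef a).
- case=> [[linE E0 leibE compE] intE].
  have contE k : lt_continuous UB UB (E k) by case: (linE k).
  have scalE i a x : E i (f a * x) = f a * E i x by case: (linE i).
  have E1 := leibniz_one_succ leibE (E0 1).
  split.
  + exact: top_integrable_coeffs_to_zero.
  + exact: top_integrable_equicontinuous.
  + by split=> // i; case: (linE i).
  + by split=> // a; split; [exact: E0 | exact: scalar_linear_succ_scalar scalE E1 a].
  + exact/binomial_composition_sym.
Qed.
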